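(* Let $P,Q$ be integers with $PQ\ne0$, $\gcd(P,Q)=1$ and $\Delta:=P^2-4Q>0$, let $\alpha,\beta$ be the roots of $x^2-Px+Q$ with $|\alpha|\ge|\beta|$, and assume $\alpha/\beta$ is not a root of unity. Let $U_n=(\alpha^n-\beta^n)/(\alpha-\beta)$. Then for all positive integers $m,\ell$ with $m\ge\ell$, \[\left|U_\ell\binom{m}{\ell}_{\boldsymbol U}\right|\ge|\alpha|^{\ell(m-\ell-1)-1}.\]
   Context: $U_0=0,U_1=1,U_{n+2}=PU_{n+1}-QU_n$. For $m\ge\ell\ge1$, $\binom{m}{\ell}_{\boldsymbol U}:=\frac{U_mU_{m-1}\cdots U_{m-\ell+1}}{U_1U_2\cdots U_\ell}$. *)

From HB Require Import structures.
From mathcomp Require Import all_boot all_order all_algebra.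
From mathcomp Require Import reals.
Set Implicit Arguments. Unset Strict Implicit. Unset Printing Implicit Defensive.
Import Order.TTheory GRing.Theory Num.Theory.
Local Open Scope ring_scope.

Fixpoint lucasU_pair (P Q : int) (n : nat) : int * int :=
  match n with
  | 0%N => (0, 1)
  | k.+1 => let: (a, b) := lucasU_pair P Q k in (b, P * b - Q * a)
  end.

Definition lucasU (P Q : int) (n : nat) : int := (lucasU_pair P Q n).1.

Definition lucas_binom (R : fieldType) (P Q : int) (m l : nat) : R :=
  (\prod_(i < l) (lucasU P Q (m - i))%:~R) / (\prod_(i < l) (lucasU P Q i.+1)%:~R).

From HB Require Import structures.
From mathcomp Require Import all_boot all_order all_algebra.
From mathcomp Require Import reals.
From mathcomp Require Import zify ring lra.
Set Implicit Arguments. Unset Strict Implicit. Unset Printing Implicit Defensive.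
Import Order.TTheory GRing.Theory Num.Theory.
Local Open Scope ring_scope.

(* Since alpha and beta are real, (|alpha| - |beta|)^2 is either P^2 (when Q < 0)
   or the discriminant (when Q > 0), a positive integer, so |alpha| >= |beta| + 1.
   This gap yields |alpha|^(n-2) <= |U_n| <= |alpha|^n for n >= 1, hence
   |U_(m-i)| >= |alpha|^(m-l-1) |U_(l-1-i)|.  Pairing the numerator factors
   U_m, ..., U_(m-l+2) of U_l binom(m, l) with the denominator factors
   U_(l-1), ..., U_1, and bounding the remaining U_(m-l+1) alone, gives
   |U_l binom(m, l)| >= |alpha|^(l(m-l-1)). *)

Lemma lucasU0 (P Q : int) : lucasU P Q 0 = 0.
Proof. by []. Qed.

Lemma lucasU1 (P Q : int) : lucasU P Q 1 = 1.
Proof. by []. Qed.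

Lemma lucasUSS (P Q : int) n :
  lucasU P Q n.+2 = P * lucasU P Q n.+1 - Q * lucasU P Q n.
Proof. by rewrite /lucasU /=; case: lucasU_pair. Qed.

Section LucasRoots.
Variables (R : comPzRingType) (P Q : int) (alpha beta : R).
Hypothesis sum_roots : alpha + beta = P%:~R.
Hypothesis prod_roots : alpha * beta = Q%:~R.

Local Notation u n := ((lucasU P Q n)%:~R : R).

Lemma lucasU_rootS n : u n.+1 = alpha * u n + beta ^+ n.
Proof.
elim: n => [|n IHn]; first by rewrite lucasU1 lucasU0 mulr0 add0r expr0.
by rewrite lucasUSS rmorphB !rmorphM /= -sum_roots -prod_roots IHn exprS; ring.
Qed.

Lemma lucasU_binet n : u n * (alpha - beta) = alpha ^+ n - beta ^+ n.
Proof.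
elim: n => [|n IHn]; first by rewrite lucasU0 mul0r !expr0 subrr.
by rewrite lucasU_rootS mulrDl -mulrA IHn !exprS; ring.
Qed.

End LucasRoots.

Section LucasBounds.
Variables (R : realFieldType) (P Q : int) (alpha beta : R).
Hypothesis P_neq0 : P != 0.
Hypothesis disc_gt0 : 0 < P ^+ 2 - 4 * Q.
Hypothesis sum_roots : alpha + beta = P%:~R.
Hypothesis prod_roots : alpha * beta = Q%:~R.
Hypothesis norm_roots_le : `|beta| <= `|alpha|.

Local Notation u n := ((lucasU P Q n)%:~R : R).
Local Notation a := `|alpha|.
Local Notation b := `|beta|.

Lemma norm_roots_gap : 1 <= a - b.
Proof.
have gap_sqr : (a - b) ^+ 2 = (alpha + beta) ^+ 2 - 2 * (alpha * beta) - 2 * `|alpha * beta|.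
  by rewrite normrM sqrrB !real_normK ?num_real //; ring.
have P2_ge1 : 1 <= (alpha + beta) ^+ 2 by rewrite sum_roots -rmorphXn ler1z; lia.
have disc_ge1 : 1 <= (alpha + beta) ^+ 2 - 4 * (alpha * beta).
  by rewrite sum_roots prod_roots -rmorphXn -[4]/(4%:~R) -rmorphM -rmorphB ler1z; lia.
have sqr_ge1 : 1 <= (a - b) ^+ 2.
  by rewrite gap_sqr; case: (lerP 0 (alpha * beta)) => [/ger0_norm|/ltr0_norm] ->; nra.
have : 0 <= a - b by rewrite subr_ge0.
nra.
Qed.

Lemma norm_root_ge1 : 1 <= a.
Proof. by have := norm_roots_gap; have := normr_ge0 beta; lra. Qed.

Lemma norm_lucasU_le_diff n : `|u n| <= a ^+ n - b ^+ n.
Proof.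
have gap := norm_roots_gap.
elim: n => [|n IHn]; first by rewrite lucasU0 normr0 !expr0 subrr.
rewrite (lucasU_rootS sum_roots prod_roots); apply: le_trans (ler_normD _ _) _.
rewrite normrM normrX !exprS.
have := exprn_ge0 n (normr_ge0 beta); have := normr_ge0 beta; nra.
Qed.

(* By the Binet formula |U_(n+2)| |alpha - beta| >= a^(n+2) - b^(n+2), and the gap
   a >= b + 1 makes the right-hand side at least a^n (a + b) >= a^n |alpha - beta|. *)
Lemma norm_lucasUSS_ge n : a ^+ n <= `|u n.+2|.
Proof.
have gap := norm_roots_gap.
have binet : `|u n.+2| * `|alpha - beta| = `|alpha ^+ n.+2 - beta ^+ n.+2|.
  by rewrite -normrM lucasU_binet.
have diff_le := lerB_dist (alpha ^+ n.+2) (beta ^+ n.+2).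
rewrite -binet !normrX !exprSr in diff_le.
have sub_le : `|alpha - beta| <= a + b := ler_normB alpha beta.
have pow_le : b ^+ n <= a ^+ n by apply: lerXn2r; rewrite ?nnegrE.
have b_ge0 := normr_ge0 beta; have bn_ge0 := exprn_ge0 n b_ge0.
have u_ge0 := normr_ge0 (u n.+2).
suff : a ^+ n * (a + b) <= `|u n.+2| * (a + b) by rewrite ler_pM2r //; lra.
have : `|u n.+2| * `|alpha - beta| <= `|u n.+2| * (a + b) by apply: ler_wpM2l.
have : 0 <= (a ^+ n - b ^+ n) * b ^+ 2.
  by apply: mulr_ge0; rewrite ?subr_ge0 ?exprn_ge0.
have : 0 <= a ^+ n * ((a - b - 1) * (a + b)).
  by rewrite !mulr_ge0 ?subr_ge0 ?addr_ge0 //; apply: le_trans pow_le.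
nra.
Qed.

Lemma norm_lucasU_geXz n : (0 < n)%N -> a ^ (n%:Z - 2) <= `|u n|.
Proof.
case: n => [//|[|n]] _.
  rewrite lucasU1 normr1 (_ : 1%:Z - 2 = -1) // exprN1.
  by rewrite invf_le1 //; have := norm_root_ge1; lra.
have -> : n.+2%:Z - 2 = n by lia.
by rewrite -exprnP norm_lucasUSS_ge.
Qed.

Lemma norm_lucasU_leXz n : `|u n| <= a ^ n%:Z.
Proof.
rewrite -exprnP; apply: le_trans (norm_lucasU_le_diff n) _.
by rewrite gerDl oppr_le0 exprn_ge0.
Qed.

Lemma lucasU_neq0 n : (0 < n)%N -> u n != 0.
Proof.
move=> n_gt0; rewrite -normr_gt0; apply: lt_le_trans (norm_lucasU_geXz n_gt0).
by apply: exprz_gt0; have := norm_root_ge1; lra.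
Qed.

Lemma norm_lucasU_shift n k :
  (0 < n)%N -> a ^ (n%:Z - k%:Z - 2) * `|u k| <= `|u n|.
Proof.
move=> n_gt0; apply: le_trans (norm_lucasU_geXz n_gt0).
have a_neq0 : a != 0 by apply: lt0r_neq0; have := norm_root_ge1; lra.
have -> : n%:Z - 2 = (n%:Z - k%:Z - 2) + k%:Z by ring.
by rewrite [leRHS]expfzDr // ler_wpM2l ?exprz_ge0 ?norm_lucasU_leXz.
Qed.

Lemma norm_lucas_numerator_ge m l : (l < m)%N ->
  (a ^ (m%:Z - l%:Z - 2)) ^+ l.+1 * `|\prod_(i < l) u i.+1|
    <= `|\prod_(i < l.+1) u (m - i)%N|.
Proof.
move=> lt_lm; set c := a ^ _.
have c_ge0 : 0 <= c by rewrite exprz_ge0.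
have paired : c ^+ l * `|\prod_(i < l) u i.+1| <= `|\prod_(i < l) u (m - i)%N|.
  rewrite !normr_prod [X in _ * X](reindex_inj rev_ord_inj) /=.
  rewrite -[l in c ^+ l]card_ord -prodr_const -big_split /=.
  apply: ler_prod => i _; rewrite mulr_ge0 //=.
  have lt_il := ltn_ord i; rewrite subnSK //.
  have -> : c = a ^ ((m - i)%N%:Z - (l - i)%N%:Z - 2) by congr (_ ^ _); lia.
  by apply: norm_lucasU_shift; lia.
have last_ge : c <= `|u (m - l)%N|.
  have -> : c = a ^ ((m - l)%N%:Z - 2) by congr (_ ^ _); lia.
  by apply: norm_lucasU_geXz; lia.
rewrite big_ord_recr normrM exprSr mulrAC.
by apply: ler_pM => //; rewrite mulr_ge0 ?exprn_ge0.
Qed.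

End LucasBounds.

Lemma lucasU_mul_binomS (R : fieldType) (P Q : int) m l :
  (lucasU P Q l.+1)%:~R != 0 :> R ->
  (lucasU P Q l.+1)%:~R * lucas_binom R P Q m l.+1
    = (\prod_(i < l.+1) (lucasU P Q (m - i))%:~R) / \prod_(i < l) (lucasU P Q i.+1)%:~R.
Proof.
move=> U_neq0; rewrite /lucas_binom [X in _ / X]big_ord_recr /= invfM.
by rewrite mulrC -!mulrA mulVf // mulr1.
Qed.

Theorem lemma9 (R : realType) (P Q : int) (alpha beta : R) :
  P * Q != 0 ->
  gcdz P Q = 1 ->
  0 < P ^+ 2 - 4 * Q ->
  alpha + beta = P%:~R -> alpha * beta = Q%:~R ->
  `|beta| <= `|alpha| ->
  ~ (exists n : nat, (0 < n)%N /\ (alpha / beta) ^+ n = 1) ->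
  forall m l : nat, (1 <= l)%N -> (l <= m)%N ->
    `|alpha| ^ (l%:Z * (m%:Z - l%:Z - 1) - 1)
      <= `|(lucasU P Q l)%:~R * lucas_binom R P Q m l|.
Proof.
move=> PQ_neq0 _ disc_gt0 sum_roots prod_roots norm_roots_le _ m [//|l] _ lt_lm.
have P_neq0 : P != 0 by move: PQ_neq0; rewrite mulf_eq0 negb_or => /andP[].
have U_neq0 n : (0 < n)%N -> (lucasU P Q n)%:~R != 0 :> R.
  exact: lucasU_neq0 P_neq0 disc_gt0 sum_roots prod_roots norm_roots_le n.
have a_ge1 := norm_root_ge1 P_neq0 disc_gt0 sum_roots prod_roots norm_roots_le.
have exp_le : `|alpha| ^ (l.+1%:Z * (m%:Z - l.+1%:Z - 1) - 1)
                <= (`|alpha| ^ (m%:Z - l%:Z - 2)) ^+ l.+1.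
  by rewrite exprnP exprz_exp; apply: ler_weXz2l => //; lia.
rewrite lucasU_mul_binomS ?U_neq0 // normrM normfV ler_pdivlMr; last first.
  by rewrite normr_gt0 prodf_seq_neq0; apply/allP => i _; apply: U_neq0.
apply: le_trans (ler_wpM2r (normr_ge0 _) exp_le) _.
exact: (norm_lucas_numerator_ge P_neq0 disc_gt0 sum_roots prod_roots norm_roots_le).
Qed.
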